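(* Let $n\ge3$ and $0<t\le s\le1$. There exist $\epsilon=\epsilon(s,n,K)\in(0,\tfrac12]$ and $\bar\delta_0=\bar\delta_0(\epsilon)\in(0,\tfrac12]$ such that the following holds for all $\delta\in(0,\bar\delta_0]$. Let $F\subset C^2([0,1]^{n-1},[0,1])$ be a finite $\delta$-separated cinematic family with cinematic constant $K$ which is a $(\delta,t,\delta^{-2\epsilon})$-set with $\tfrac12\delta^{2\epsilon-t}\le|F|\le\delta^{-t}$ and $\|f\|_{C^2([0,1]^{n-1})}\le K$ for all $f\in F$, and for each $f\in F$ let $E(f)\subset\mathrm{graph}(f)$ be a finite $\delta$-separated $(\delta,n-2+s,\delta^{-2\epsilon})$-set with $|E(f)|=M$, where $\delta^{2\epsilon-(n-2+s)}\le M\le\delta^{-(n-2+s)}$. Then for every $f\in F$, the projection $P_{E(f)}$ of $E(f)$ onto the first $n-1$ coordinates is a $(\delta,n-2+s,\delta^{-3\epsilon})$-set.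
   Context: $|A|$ is cardinality and $|A|_\delta$ the $\delta$-covering number. A bounded set $P$ in a metric space $X$ is a $(\delta,\sigma,C)$-set if $|P\cap B(x,r)|_\delta\le Cr^\sigma|P|_\delta$ for all $x\in X$, $r\ge\delta$; for subsets of $C^2([0,1]^{n-1},[0,1])$ the metric is the $C^2$-norm metric. Cinematic family: for a domain $U\subset\mathbb{R}^k$, $F\subset C^2(U)$ is a cinematic family with cinematic constant $K$, doubling constant $D$ and modulus of continuity $\alpha$ if: (1) $F$ lies in a ball of diameter $K$ in $C^2(U)$; (2) $F$ is doubling with constant at most $D$; (3) for all $f,g\in F$ and $\xi\in S^{k-1}$, $\inf_{x\in U}\{|f-g|(x)+|\nabla f-\nabla g|(x)+|\nabla_\xi\nabla_\xi(f-g)(x)|\}\ge K^{-1}\|f-g\|_{C^2(U)}$, with $\nabla_\xi\nabla_\xi h=\langle\nabla^2h\,\xi,\xi\rangle$; (4) there is an increasing continuous $\alpha:[0,1]\to[0,\infty)$, $\alpha(0)=0$, $0<\alpha(s)\le K^{-1}s$ for $s\in(0,1]$, such that for all $f,g\in F$, $\xi\in S^{k-1}$, sufficiently small $\eta>0$ and $x,y\in U$ with $|x-y|\le\alpha(\eta)$: $|\nabla_\xi\nabla_\xi(f-g)(x)-\nabla_\xi\nabla_\xi(f-g)(y)|\le\eta$. *)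

From HB Require Import structures.
From mathcomp Require Import all_boot all_order all_algebra.
From mathcomp Require Import all_classical all_reals all_analysis.
Set Implicit Arguments. Unset Strict Implicit. Unset Printing Implicit Defensive.
Import Order.TTheory GRing.Theory Num.Theory.
Import numFieldNormedType.Exports.
Local Open Scope classical_set_scope.
Local Open Scope ring_scope.

Section Defs.
Variable R : realType.

Definition eucl_norm k (v : 'rV[R]_k) : R := Num.sqrt (\sum_(i < k) v 0 i ^+ 2).
Definition eucl_dist k (x y : 'rV[R]_k) : R := eucl_norm (x - y).
Definition eucl_dot k (u v : 'rV[R]_k) : R := \sum_(i < k) u 0 i * v 0 i.
Definition usphere k : set 'rV[R]_k := [set xi | eucl_norm xi = 1].
Definition ebasis k (i : 'I_k) : 'rV[R]_k := \row_(j < k) (i == j)%:R.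
Definition cube k : set 'rV[R]_k := [set x | forall i, 0 <= x 0 i <= 1].

Definition cover_by T (X : set T) (d : T -> T -> R) (A : set T) (delta : R)
  (N : nat) : Prop :=
  exists c : 'I_N -> T, (forall i, X (c i)) /\
    (forall a, A a -> exists i, d (c i) a <= delta).
Definition covnum T (X : set T) (d : T -> T -> R) (A : set T) (delta : R) : R :=
  inf [set r : R | exists N, r = N%:R /\ cover_by X d A delta N].
Definition dcball T (d : T -> T -> R) (x : T) (r : R) : set T := [set y | d x y <= r].
Definition dbounded T (d : T -> T -> R) (P : set T) : Prop :=
  exists x0 r0, P `<=` dcball d x0 r0.
Definition dsC_set T (X : set T) (d : T -> T -> R) (P : set T)
  (delta sigma C : R) : Prop :=
  P `<=` X /\ dbounded d P /\
  forall x r, X x -> delta <= r ->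
    covnum X d (P `&` dcball d x r) delta <= C * r `^ sigma * covnum X d P delta.
Definition dseparated T (d : T -> T -> R) (P : set T) (delta : R) : Prop :=
  forall x y, P x -> P y -> x <> y -> delta <= d x y.

Definition pderiv k (h : 'rV[R]_k -> R) (i : 'I_k) : 'rV[R]_k -> R :=
  fun x => 'D_(ebasis i) h x.
Definition grad k (h : 'rV[R]_k -> R) (x : 'rV[R]_k) : 'rV[R]_k :=
  \row_(i < k) pderiv h i x.
Definition hess k (h : 'rV[R]_k -> R) (i j : 'I_k) : 'rV[R]_k -> R :=
  pderiv (pderiv h i) j.
Definition dxixi k (h : 'rV[R]_k -> R) (xi x : 'rV[R]_k) : R :=
  \sum_(i < k) \sum_(j < k) hess h i j x * xi 0 i * xi 0 j.
Definition C2 k (h : 'rV[R]_k -> R) : Prop :=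
  exists O : set 'rV[R]_k, open O /\ @cube k `<=` O /\
    forall x, O x ->
      [/\ differentiable h x,
          (forall i, differentiable (pderiv h i) x) &
          (forall i j, {for x, continuous (hess h i j)})].
Definition C2norm k (h : 'rV[R]_k -> R) : R :=
  sup [set r : R | exists x, @cube k x /\
        r = Num.max `|h x|
              (Num.max (\big[Num.max/0]_(i < k) `|pderiv h i x|)
                       (\big[Num.max/0]_(i < k) \big[Num.max/0]_(j < k)
                                `|hess h i j x|))].
Definition C2dist k (f g : 'rV[R]_k -> R) : R := C2norm (fun x => f x - g x).
Definition C2X k : set ('rV[R]_k -> R) :=
  [set f | C2 f /\ forall x, @cube k x -> 0 <= f x <= 1].

Definition doubling k (F : set ('rV[R]_k -> R)) (D : R) : Prop :=
  forall f r, F f -> 0 < r ->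
    exists N, N%:R <= D /\
      cover_by F (@C2dist k) (F `&` dcball (@C2dist k) f r) (r / 2) N.
Definition cinematic k (F : set ('rV[R]_k -> R)) (K D : R) (alpha : R -> R) : Prop :=
  [/\ F `<=` (@C2 k),
      exists g, C2 g /\ forall f, F f -> C2dist f g <= K / 2,
      doubling F D,
      (forall f g xi, F f -> F g -> @usphere k xi ->
        forall x, @cube k x ->
          K^-1 * C2dist f g <=
          `|f x - g x| + eucl_norm (grad f x - grad g x)
            + `|dxixi (fun y => f y - g y) xi x|) &
      [/\ {in `[0, 1] &, {homo alpha : a b / a <= b}},
          {within `[0, 1], continuous alpha},
          alpha 0 = 0,
          (forall a, 0 < a <= 1 -> 0 < alpha a <= K^-1 * a) &
          (forall f g xi, F f -> F g -> @usphere k xi ->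
            exists eta0, 0 < eta0 <= 1 /\
            forall eta, 0 < eta <= eta0 -> forall x y, @cube k x -> @cube k y ->
              eucl_dist x y <= alpha eta ->
              `|dxixi (fun z => f z - g z) xi x
                - dxixi (fun z => f z - g z) xi y| <= eta)]].

Definition graphf k (f : 'rV[R]_k -> R) : set 'rV[R]_(k + 1) :=
  [set row_mx x (\row_(j < 1) f x) | x in @cube k].
Definition projf k (p : 'rV[R]_(k + 1)) : 'rV[R]_k := lsubmx p.

End Defs.

From HB Require Import structures.
From mathcomp Require Import all_boot all_order all_algebra.
From mathcomp Require Import all_classical all_reals all_analysis.
From mathcomp Require Import ring lra.
Set Implicit Arguments. Unset Strict Implicit. Unset Printing Implicit Defensive.
Import Order.TTheory GRing.Theory Num.Theory.
Import numFieldNormedType.Exports.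
Local Open Scope classical_set_scope.
Local Open Scope ring_scope.

(* Along the graph of f the projection forgets the last coordinate, which is a
   Lipschitz function (constant K in the l1 norm) of the others: the projection
   is 1-Lipschitz and its inverse is [lift_const]-Lipschitz, lift_const depending
   only on n and K.  Hence [P ∩ B(x, r)] is the projection of [E ∩ B(w, λ r)] for
   a suitable w, and above each δ-ball of a cover of P the graph is covered by a
   fixed number [ncells] of δ-balls, so |E|_δ <= ncells |P|_δ.  Feeding both into
   the (δ, σ, δ^(-2ε)) property of E loses the factor λ^(n-1) ncells, which is at
   most δ^(-ε) once ε = 1/(λ^(n-1) ncells + 2) and δ <= exp(-ε^-2). *)

Section CoveringNumbers.
Variable R : realType.
Variables (T : Type) (X : set T) (d : T -> T -> R).

Lemma covnum_le_cover A delta N : cover_by X d A delta N -> covnum X d A delta <= N%:R.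
Proof. by move=> AN; apply: ge_inf; [exists 0 => _ [M [-> _]] | exists N]. Qed.

Lemma covnum_ge A delta b : (exists N, cover_by X d A delta N) ->
  (forall N, cover_by X d A delta N -> b <= N%:R) -> b <= covnum X d A delta.
Proof.
move=> [N0 AN0] bN; apply: lb_le_inf; first by exists N0%:R, N0.
by move=> _ [N [-> AN]]; exact: bN.
Qed.

Lemma covnum_ge0 A delta : (exists N, cover_by X d A delta N) -> 0 <= covnum X d A delta.
Proof. by move=> AN; apply: covnum_ge => // N _; rewrite ler0n. Qed.

Lemma cover_by_finType A delta (I : finType) (c : I -> T) :
  (forall i, X (c i)) -> (forall a, A a -> exists i, d (c i) a <= delta) ->
  cover_by X d A delta #|I|.
Proof.
move=> Xc Ac; exists (fun j => c (enum_val j)); split => // a /Ac [i ca].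
by exists (enum_rank i); rewrite enum_rankK.
Qed.

Lemma cover_by_card A delta M : (A #= `I_M)%card -> A `<=` X ->
  (forall a, d a a <= delta) -> cover_by X d A delta M.
Proof.
move=> /card_esym /card_bijP [g [h _ hg]] AX dd.
have IM (i : 'I_M) : (i : nat) \in `I_M by apply: mem_set => /=.
exists (fun i => val (g (exist _ (val i) (IM i)))); split.
  by move=> i; apply: AX; have := valP (g (exist _ (val i) (IM i))); rewrite inE.
move=> a Aa; have Aa' : a \in A by apply: mem_set.
set y := h (exist _ a Aa').
have yM : (val y < M)%N by have := valP y; rewrite inE.
exists (Ordinal yM) => /=.
have -> : exist _ (val y) (IM (Ordinal yM)) = y by apply: val_inj.
by rewrite hg.
Qed.

End CoveringNumbers.

Section CoveringImage.
Variable R : realType.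
Variables (T T' : Type) (X : set T) (X' : set T').
Variables (d : T -> T -> R) (d' : T' -> T' -> R) (g : T -> T').
Hypotheses (gX : forall x, X x -> X' (g x))
  (g_nonexpanding : forall a b, d' (g a) (g b) <= d a b).

Lemma cover_by_image A A' delta N : A' `<=` g @` A ->
  cover_by X d A delta N -> cover_by X' d' A' delta N.
Proof.
move=> A'gA [c [Xc Ac]]; exists (g \o c); split=> [i | y /A'gA [a Aa <-]].
  exact/gX/Xc.
by have [i ca] := Ac a Aa; exists i; exact: le_trans (g_nonexpanding _ _) ca.
Qed.

Lemma covnum_le_image A A' delta : A' `<=` g @` A ->
  (exists N, cover_by X d A delta N) -> covnum X' d' A' delta <= covnum X d A delta.
Proof.
move=> A'gA AN; apply: covnum_ge => // N /(cover_by_image A'gA).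
exact: covnum_le_cover.
Qed.

End CoveringImage.

Lemma dsC_set_le (R : realType) T (X : set T) (d : T -> T -> R) P delta sigma C C' :
  C <= C' -> (exists N, cover_by X d P delta N) ->
  dsC_set X d P delta sigma C -> dsC_set X d P delta sigma C'.
Proof.
move=> CC' PN [PX [Pb Pball]]; split=> //; split=> // x r Xx dr.
apply: (le_trans (Pball x r Xx dr)); rewrite -!mulrA ler_wpM2r //.
by apply: mulr_ge0; [exact: powR_ge0 | exact: covnum_ge0].
Qed.

Section L1Norm.
Variable R : realType.
Implicit Types k : nat.

Definition l1norm k (v : 'rV[R]_k) : R := \sum_(i < k) `|v 0 i|.

Lemma l1norm_ge0 k (v : 'rV[R]_k) : 0 <= l1norm v.
Proof. exact: sumr_ge0. Qed.

Lemma l1norm_le k (v : 'rV[R]_k) a : (forall j, `|v 0 j| <= a) -> l1norm v <= k%:R * a.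
Proof.
move=> va; apply: (le_trans (ler_sum _ (fun i _ => va i))).
by rewrite sumr_const card_ord mulr_natl.
Qed.

Lemma l1norm_row_mx k (u : 'rV[R]_k) (w : 'rV[R]_1) :
  l1norm (row_mx u w) = l1norm u + `|w 0 0|.
Proof.
rewrite /l1norm big_split_ord /= big_ord1; congr (_ + _).
  by apply: eq_bigr => i _; rewrite row_mxEl.
by rewrite row_mxEr.
Qed.

Lemma eucl_norm_le_l1norm k (v : 'rV[R]_k) : eucl_norm v <= l1norm v.
Proof.
rewrite /eucl_norm -(ger0_norm (l1norm_ge0 v)) -sqrtr_sqr ler_sqrt ?sqr_ge0 //.
have [] // : 0 <= l1norm v /\ \sum_(i < k) v 0 i ^+ 2 <= l1norm v ^+ 2.
apply: (big_ind2 (fun a b => 0 <= b /\ a <= b ^+ 2))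
  => [|a1 b1 a2 b2 [b10 ab1] [b20 ab2]|i _].
- by rewrite expr0n.
- split; first exact: addr_ge0.
  apply: (le_trans (lerD ab1 ab2)); rewrite sqrrD lerD2r lerDl.
  by apply: mulrn_wge0; apply: mulr_ge0.
- by rewrite real_normK ?num_real.
Qed.

Lemma coord_le_eucl_norm k (v : 'rV[R]_k) j : `|v 0 j| <= eucl_norm v.
Proof.
rewrite /eucl_norm -sqrtr_sqr ler_sqrt; last by apply: sumr_ge0 => i _; exact: sqr_ge0.
by rewrite (bigD1 j) //= lerDl; apply: sumr_ge0 => i _; exact: sqr_ge0.
Qed.

Lemma eucl_dist_xx k (x : 'rV[R]_k) : eucl_dist x x = 0.
Proof. by rewrite /eucl_dist /eucl_norm subrr big1 ?sqrtr0 // => i _; rewrite mxE expr0n. Qed.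

Lemma eucl_dist_lsubmx k (x y : 'rV[R]_(k + 1)) :
  eucl_dist (lsubmx x) (lsubmx y) <= eucl_dist x y.
Proof.
rewrite /eucl_dist -linearB /eucl_norm ler_sqrt; last by apply: sumr_ge0 => i _; exact: sqr_ge0.
rewrite [leRHS]big_split_ord /= [leLHS](eq_bigr (fun i => (x - y) 0 (lshift 1 i) ^+ 2)).
  by rewrite lerDl; apply: sumr_ge0 => i _; exact: sqr_ge0.
by move=> i _; rewrite mxE.
Qed.

Lemma l1norm_le_eucl_dist k (c u : 'rV[R]_k) a :
  eucl_dist c u <= a -> l1norm (c - u) <= k%:R * a.
Proof. by move=> cua; apply: l1norm_le => j; exact: le_trans (coord_le_eucl_norm _ j) cua. Qed.

Lemma l1norm_subr_le k (c u v : 'rV[R]_k) a : eucl_dist c u <= a -> eucl_dist c v <= a ->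
  l1norm (u - v) <= k%:R * (2 * a).
Proof.
move=> cua cva; apply: l1norm_le => j.
have := le_trans (coord_le_eucl_norm _ j) cua; have := le_trans (coord_le_eucl_norm _ j) cva.
rewrite !mxE !ler_norml => /andP[? ?] /andP[? ?]; apply/andP; split; lra.
Qed.

End L1Norm.

Lemma continuous_bigmax (R : realType) (T : topologicalType) (I : Type) (r : seq I)
    (F : I -> T -> R) x :
  (forall i, {for x, continuous (F i)}) ->
  {for x, continuous (fun y => \big[Num.max/0]_(i <- r) F i y)}.
Proof.
move=> Fx; elim: r => [|a r IHr].
  rewrite (_ : (fun y => _) = cst 0); first exact: cst_continuous.
  by apply/funext => y; rewrite big_nil.
rewrite (_ : (fun y => _) = fun y => Num.max (F a y) (\big[Num.max/0]_(i <- r) F i y)).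
  exact: continuous_max.
by apply/funext => y; rewrite big_cons.
Qed.

Section C2Lipschitz.
Variables (R : realType) (k : nat).
Implicit Types (h : 'rV[R]_k -> R) (x y : 'rV[R]_k).

Definition C2norm_at h x : R :=
  Num.max `|h x| (Num.max (\big[Num.max/0]_(i < k) `|pderiv h i x|)
                          (\big[Num.max/0]_(i < k) \big[Num.max/0]_(j < k)
                             `|hess h i j x|)).

Lemma cube_compact : compact (@cube R k).
Proof.
have -> : @cube R k = [set v : 'rV[R]_k | forall i, `[0, 1]%classic (v ord0 i)].
  by rewrite predeqE => v; split => /= cv i; have := cv i; rewrite /= in_itv.
exact: (rV_compact (fun _ => @segment_compact R 0 1)).
Qed.

Lemma C2norm_at_continuous h x : C2 h -> cube x -> {for x, continuous (C2norm_at h)}.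
Proof.
move=> [U [oU [cU hU]]] cx; have [dh dp ch] := hU x (cU x cx).
have cnorm (g : 'rV[R]_k -> R) : {for x, continuous g} -> {for x, continuous (fun y => `|g y|)}.
  by move=> cg; apply: continuous_comp => //; exact: norm_continuous.
apply: continuous_max; first exact/cnorm/differentiable_continuous.
apply: continuous_max.
  by apply: continuous_bigmax => i; exact/cnorm/differentiable_continuous.
by apply: continuous_bigmax => i; apply: continuous_bigmax => j; exact: cnorm.
Qed.

Lemma C2norm_at_bounded h :
  C2 h -> has_ubound [set r | exists x, @cube R k x /\ r = C2norm_at h x].
Proof.
move=> Ch.
have : compact (C2norm_at h @` @cube R k).
  apply: continuous_compact; last exact: cube_compact.
  by apply: continuous_in_subspaceT => x; rewrite inE => cx; exact: C2norm_at_continuous.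
move=> /compact_bounded [M [_ /(_ (`|M| + 1))]].
rewrite (le_lt_trans (ler_norm _)) ?ltrDl// => /(_ erefl) hM.
exists (`|M| + 1) => _ [x [cx ->]].
by rewrite (le_trans (ler_norm _)) // hM //; exists x.
Qed.

Lemma pderiv_le_C2norm h x j : C2 h -> cube x -> `|pderiv h j x| <= C2norm h.
Proof.
move=> Ch cx; apply: (@le_trans _ _ (C2norm_at h x)).
  by rewrite /C2norm_at !le_max le_bigmax orbT.
by apply: (ub_le_sup (C2norm_at_bounded Ch)); exists x.
Qed.

Lemma cube_segment x y t : cube x -> cube y -> 0 <= t <= 1 -> cube (x + t *: (y - x)).
Proof.
move=> cx cy /andP[t0 t1] j; rewrite !mxE.
by have /andP[? ?] := cx j; have /andP[? ?] := cy j; apply/andP; split; nra.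
Qed.

Lemma is_derive_line h x (v : 'rV[R]_k) t : derivable h (x + t *: v) v ->
  is_derive t 1 (fun s => h (x + s *: v)) ('D_v h (x + t *: v)).
Proof.
move=> dh.
have lineE :
    (fun s : R => s^-1 *: (((fun s => h (x + s *: v)) \o shift t) (s *: 1) - h (x + t *: v))) =
    (fun s : R => s^-1 *: ((h \o shift (x + t *: v)) (s *: v) - h (x + t *: v))).
  apply/funext => s /=; congr (_ *: (_ - h _)); congr h.
  by rewrite scaler1 scalerDl addrCA addrA.
by split; rewrite /derivable /derive lineE.
Qed.

Lemma derive_sum_pderiv h x (v : 'rV[R]_k) : differentiable h x ->
  'D_v h x = \sum_(j < k) v 0 j * pderiv h j x.
Proof.
move=> dh; rewrite deriveE // {1}(row_sum_delta v) linear_sum.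
apply: eq_bigr => j _; rewrite linearZ /= /pderiv deriveE //.
by congr (_ * 'd h x _); apply/rowP => l; rewrite !mxE eq_sym.
Qed.

Lemma C2_lipschitz_l1 h K x y : C2 h -> C2norm h <= K -> cube x -> cube y ->
  `|h y - h x| <= K * l1norm (y - x).
Proof.
move=> Ch hK cx cy; have [U [oU [cU hU]]] := Ch.
set v := y - x; pose phi s := h (x + s *: v).
have cube_x_sv s : 0 <= s <= 1 -> cube (x + s *: v) by exact: cube_segment.
have dphi (s : R) : s \in `]0, 1[ -> is_derive s 1 phi ('D_v h (x + s *: v)).
  rewrite in_itv /= => /andP[s0 s1]; apply/is_derive_line/diff_derivable.
  by have [] := hU _ (cU _ (cube_x_sv s _)); rewrite ?ltW.
have cphi : {within `[0, 1], continuous phi}.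
  apply: continuous_in_subspaceT => s; rewrite inE /= in_itv /= => s01.
  apply: continuous_comp.
    by apply: continuousD; [exact: cst_continuous | exact: continuousZr_tmp].
  by have [dh _ _] := hU _ (cU _ (cube_x_sv s s01)); exact: differentiable_continuous.
have [c c01 phiE] := MVT ltr01 dphi cphi.
have -> : h y - h x = phi 1 - phi 0.
  by rewrite /phi scale1r scale0r addr0 /v addrCA subrr addr0.
have {}c01 : 0 <= c <= 1 by move: c01; rewrite in_itv /= => /andP[? ?]; rewrite !ltW.
have [dh _ _] := hU _ (cU _ (cube_x_sv c c01)).
rewrite phiE subr0 mulr1 derive_sum_pderiv //; apply: (le_trans (ler_norm_sum _ _ _)).
rewrite /l1norm mulr_sumr; apply: ler_sum => j _; rewrite normrM mulrC ler_wpM2r //.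
exact: le_trans (pderiv_le_C2norm _ Ch (cube_x_sv c c01)) hK.
Qed.

End C2Lipschitz.

Section Grid.
Variables (R : realType) (m : nat) (lam delta : R).
Hypothesis delta_gt0 : 0 < delta.

Definition grid_size : nat := (Num.truncn (2 * lam * m%:R)).+1.

(* The mesh is [delta / m], so that the l1 distance, hence the Euclidean one,
   from a point of the box to the grid point below it is at most [delta]. *)
Definition grid_point (b : 'rV[R]_m) (q : {ffun 'I_m -> 'I_grid_size}) : 'rV[R]_m :=
  \row_j (b 0 j - lam * delta + (q j)%:R * (delta / m%:R)).

Lemma grid_cover (b z : 'rV[R]_m) : (0 < m)%N ->
  (forall j, `|z 0 j - b 0 j| <= lam * delta) -> exists q, eucl_dist (grid_point b q) z <= delta.
Proof.
move=> m0 zb; set eta := delta / m%:R.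
have eta0 : 0 < eta by rewrite divr_gt0 // ltr0n.
pose u j := (z 0 j - b 0 j + lam * delta) / eta.
have u_itv j : 0 <= u j <= 2 * lam * m%:R.
  have := zb j; rewrite /u ler_norml => /andP[? ?].
  apply/andP; split; first by apply: divr_ge0; [lra | exact: ltW].
  rewrite ler_pdivrMr // /eta.
  have -> : 2 * lam * m%:R * (delta / m%:R) = 2 * lam * delta.
    by field; rewrite pnatr_eq0 -lt0n.
  lra.
have uq j : (Num.truncn (u j) < grid_size)%N.
  by rewrite ltnS le_truncn //; case/andP: (u_itv j).
exists [ffun j => Ordinal (uq j)].
apply: (le_trans (eucl_norm_le_l1norm _)); apply: (@le_trans _ _ (m%:R * eta)).
  apply: l1norm_le => j; rewrite !mxE ffunE /=.
  have zE : z 0 j = u j * eta - lam * delta + b 0 j.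
    by rewrite /u -mulrA mulVf ?gt_eqF // mulr1 addrK subrK.
  have /andP[t1 t2] := truncn_itv (proj1 (andP (u_itv j))).
  have -> : b 0 j - lam * delta + (Num.truncn (u j))%:R * eta - z 0 j =
            ((Num.truncn (u j))%:R - u j) * eta by rewrite zE; ring.
  rewrite normrM (gtr0_norm eta0) ler_piMl ?(ltW eta0) // ler_norml.
  by rewrite -natr1 in t2; apply/andP; split; lra.
by rewrite /eta mulrC -mulrA mulVf ?mulr1 // pnatr_eq0 -lt0n.
Qed.

End Grid.

Lemma graphfP (R : realType) k (f : 'rV[R]_k -> R) e : graphf f e ->
  cube (lsubmx e) /\ e = row_mx (lsubmx e) (\row_(j < 1) f (lsubmx e)).
Proof. by move=> [x cx <-]; rewrite row_mxKl. Qed.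

Section GraphProjection.
Variables (R : realType) (k : nat) (f : 'rV[R]_k -> R) (K : R).
Hypotheses (Cf : C2 f) (fK : C2norm f <= K).

Definition lift_const : R := 1 + k%:R * (1 + 2 * `|K|).

Lemma lift_const_ge1 : 1 <= lift_const.
Proof. by rewrite lerDl mulr_ge0 // addr_ge0 // mulr_ge0. Qed.

Lemma l1norm_graphf_lift (c : 'rV[R]_k) e e' a : graphf f e -> graphf f e' ->
  eucl_dist c (lsubmx e) <= a -> eucl_dist c (lsubmx e') <= a ->
  l1norm (row_mx c (rsubmx e') - e) <= lift_const * a.
Proof.
move=> /graphfP [ce eE] /graphfP [ce' e'E] cea ce'a.
have a0 : 0 <= a by exact: le_trans (sqrtr_ge0 _) cea.
rewrite eE e'E row_mxKr opp_row_mx add_row_mx l1norm_row_mx !mxE.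
have fLip : `|f (lsubmx e') - f (lsubmx e)| <= `|K| * (k%:R * (2 * a)).
  apply: le_trans (C2_lipschitz_l1 Cf (le_trans fK (ler_norm K)) ce ce') _.
  by rewrite ler_wpM2l // (l1norm_subr_le ce'a cea).
apply: le_trans (lerD (l1norm_le_eucl_dist cea) fLip) _.
have -> : lift_const * a = a + (k%:R * a + `|K| * (k%:R * (2 * a))).
  by rewrite /lift_const; ring.
by rewrite lerDr.
Qed.

Variables (E : set 'rV[R]_(k + 1)) (M : nat) (delta : R).
Hypotheses (EG : E `<=` graphf f) (EM : (E #= `I_M)%card) (delta_gt0 : 0 < delta).

Let P := @projf R k @` E.

Lemma cover_by_graph_subset (A : set 'rV[R]_(k + 1)) :
  A `<=` E -> exists N, cover_by setT (@eucl_dist R _) A delta N.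
Proof.
move=> AE.
have dd (a : 'rV[R]_(k + 1)) : eucl_dist a a <= delta by rewrite eucl_dist_xx ltW.
have [c [_ Ec]] := cover_by_card (X := setT) EM (fun _ _ => I) dd.
by exists M, c; split=> // a /AE /Ec.
Qed.

Lemma cover_by_projf (A : set 'rV[R]_k) :
  A `<=` P -> exists N, cover_by setT (@eucl_dist R _) A delta N.
Proof.
move=> AP; have [N EN] := cover_by_graph_subset (@subset_refl _ E).
by exists N; apply: cover_by_image AP EN => // x y; exact: eucl_dist_lsubmx.
Qed.

Definition ncells : nat := grid_size (k + 1) lift_const ^ (k + 1).

(* Above each ball of a cover of [P], a grid of [ncells] balls anchored at a
   point of [E] over that ball covers all of [E] over it. *)
Lemma covnum_graph_le :
  covnum setT (@eucl_dist R _) E delta <= ncells%:R * covnum setT (@eucl_dist R _) P delta.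
Proof.
have [N0 PN0] := cover_by_projf (@subset_refl _ P).
have ncells_gt0 : 0 < (ncells%:R : R) by rewrite ltr0n expn_gt0.
rewrite mulrC -ler_pdivrMr //; apply: covnum_ge; first by exists N0.
move=> N [c [_ Pc]]; rewrite ler_pdivrMr // -natrM; apply: covnum_le_cover.
pose over i e := E e /\ eucl_dist (c i) (lsubmx e) <= delta.
pose anchor i := row_mx (c i) (rsubmx (xget 0 (over i))).
have := cover_by_finType (X := setT) (d := @eucl_dist R _) (A := E) (delta := delta)
  (c := fun iq : 'I_N * {ffun 'I_(k + 1) -> 'I_(grid_size (k + 1) lift_const)} =>
     grid_point delta (anchor iq.1) iq.2) (fun _ => I).
rewrite card_prod card_ffun !card_ord; apply=> e Ee.
have [i ce] := Pc _ (imageP (@projf R k) Ee).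
have [Ee' ce'] : over i (xget 0 (over i)) by apply: xgetPex; exists e.
have anchor_close j : `|e 0 j - anchor i 0 j| <= lift_const * delta.
  have -> : e 0 j - anchor i 0 j = - (anchor i - e) 0 j by rewrite !mxE opprB.
  rewrite normrN.
  apply: le_trans (coord_le_eucl_norm _ j) (le_trans (eucl_norm_le_l1norm _) _).
  exact: l1norm_graphf_lift (EG Ee) (EG Ee') ce ce'.
have [q eq] := grid_cover delta_gt0 (leq_addl k 1) anchor_close.
by exists (i, q).
Qed.

Lemma projf_ball_subset x r : exists w,
  P `&` dcball (@eucl_dist R _) x r `<=`
  @projf R k @` (E `&` dcball (@eucl_dist R _) w (lift_const * r)).
Proof.
have [[e0 [Ee0 xe0]] | none] :=
  pselect (exists e, E e /\ eucl_dist x (lsubmx e) <= r); last first.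
  by exists 0 => _ [[e Ee <-] xe]; exfalso; apply: none; exists e.
exists (row_mx x (rsubmx e0)) => _ [[e Ee <-] xe]; exists e => //; split=> //.
apply: le_trans (eucl_norm_le_l1norm _) _.
exact: l1norm_graphf_lift (EG Ee) (EG Ee0) xe xe0.
Qed.

Lemma covnum_projf_ball_le x r : exists w,
  covnum setT (@eucl_dist R _) (P `&` dcball (@eucl_dist R _) x r) delta <=
  covnum setT (@eucl_dist R _) (E `&` dcball (@eucl_dist R _) w (lift_const * r)) delta.
Proof.
have [w Pw] := projf_ball_subset x r; exists w.
apply: (covnum_le_image (fun _ _ => I) (@eucl_dist_lsubmx R k) Pw).
by apply: cover_by_graph_subset => a [].
Qed.

Lemma projf_graph_dbounded : dbounded (@eucl_dist R _) P.
Proof.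
exists 0, (k%:R * 1) => _ [e /EG /graphfP [ce _] <-].
apply: le_trans (eucl_norm_le_l1norm _) _; apply: l1norm_le => j.
by have := ce j; rewrite !mxE sub0r normrN => /andP[? ?]; rewrite ger0_norm.
Qed.

Lemma dsC_set_projf_graph sigma C : sigma <= k%:R -> 0 <= C ->
  dsC_set setT (@eucl_dist R _) E delta sigma C ->
  dsC_set setT (@eucl_dist R _) P delta sigma (C * (lift_const ^+ k * ncells%:R)).
Proof.
move=> sigma_le_k C0 [_ [_ Eball]]; split=> //; split; first exact: projf_graph_dbounded.
move=> x r _ dr; have r0 : 0 <= r := le_trans (ltW delta_gt0) dr.
have lam1 := lift_const_ge1; have lam0 : 0 <= lift_const := le_trans ler01 lam1.
have [w Pw] := covnum_projf_ball_le x r.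
have Ew := Eball w (lift_const * r) I (le_trans dr (ler_peMl r0 lam1)).
have lam_pow : lift_const `^ sigma <= lift_const ^+ k.
  by rewrite -(powR_mulrn _ lam0); exact: ler_powR.
have covP0 := covnum_ge0 (cover_by_projf (@subset_refl _ P)).
apply: le_trans Pw (le_trans Ew _); rewrite powRM //.
set L := lift_const `^ sigma; set rho := r `^ sigma.
set cP := covnum _ _ P _.
have rho0 : 0 <= rho by exact: powR_ge0.
apply: (@le_trans _ _ (C * (L * rho) * (ncells%:R * cP))).
  by rewrite ler_wpM2l ?covnum_graph_le // !mulr_ge0 ?powR_ge0.
rewrite (_ : _ * (_ * cP) = C * rho * cP * ncells%:R * L); last by ring.
rewrite (_ : _ * _ * cP = C * rho * cP * ncells%:R * lift_const ^+ k); last by ring.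
by rewrite ler_wpM2l // !mulr_ge0.
Qed.

End GraphProjection.

Lemma inv_le_powRN (R : realType) (eps delta : R) :
  0 < eps -> 0 < delta <= expR (- eps^-2) -> eps^-1 <= delta `^ (- eps).
Proof.
move=> eps0 /andP[delta0 small].
have le_expR : delta `^ eps <= expR (- eps^-1).
  rewrite (_ : - eps^-1 = - eps^-2 * eps); last by field; rewrite gt_eqF.
  by rewrite expRM ge0_ler_powR // ?nnegrE ?expR_ge0 ?ltW.
have ge_expR : expR (eps^-1) <= (delta `^ eps)^-1.
  by rewrite -[expR _]invrK -expRN lef_pV2 ?posrE ?expR_gt0 ?powR_gt0.
rewrite powRN; apply: le_trans (le_trans (expR_ge1Dx _) ge_expR).
by rewrite lerDr.
Qed.

Theorem lemma4p2 (R : realType) :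
  exists delta0 : R -> R,
  forall (n : nat) (K s : R), (3 <= n)%N -> 0 < s <= 1 ->
  exists eps : R, 0 < eps <= 2^-1 /\ 0 < delta0 eps <= 2^-1 /\
  forall (t delta : R), 0 < t <= s -> 0 < delta <= delta0 eps ->
  forall (F : set ('rV[R]_(n.-1) -> R)) (m : nat) (D : R) (alpha : R -> R),
    F `<=` @C2X R n.-1 ->
    (F #= `I_m)%card ->
    dseparated (@C2dist R n.-1) F delta ->
    cinematic F K D alpha ->
    dsC_set (@C2X R n.-1) (@C2dist R n.-1) F delta t (delta `^ (- (2 * eps))) ->
    2^-1 * delta `^ (2 * eps - t) <= m%:R <= delta `^ (- t) ->
    (forall f, F f -> C2norm f <= K) ->
  forall (E : ('rV[R]_(n.-1) -> R) -> set 'rV[R]_(n.-1 + 1)) (M : nat),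
    (forall f, F f ->
       [/\ E f `<=` graphf f,
           (E f #= `I_M)%card,
           dseparated (@eucl_dist R _) (E f) delta &
           dsC_set setT (@eucl_dist R _) (E f) delta (n%:R - 2 + s)
                   (delta `^ (- (2 * eps)))]) ->
    delta `^ (2 * eps - (n%:R - 2 + s)) <= M%:R <= delta `^ (- (n%:R - 2 + s)) ->
  forall f, F f ->
    dsC_set setT (@eucl_dist R _) (@projf R n.-1 @` E f) delta (n%:R - 2 + s)
            (delta `^ (- (3 * eps))).
Proof.
exists (fun eps => expR (- eps^-2) / 2) => n K s n3 /andP[s0 s1].
pose k := n.-1; pose A : R := lift_const k K ^+ k * (ncells k K)%:R.
have A0 : 0 <= A by rewrite mulr_ge0 // exprn_ge0 // (le_trans ler01 (lift_const_ge1 _ _)).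
pose eps := (A + 2)^-1; have eps0 : 0 < eps by rewrite invr_gt0; lra.
exists eps; split; first by rewrite eps0 lef_pV2 ?posrE; lra.
split.
  have : expR (- eps^-2) <= 1 by rewrite expR_le1 oppr_le0 invr_ge0 exprn_ge0 // ltW.
  by rewrite divr_gt0 ?expR_gt0 //=; lra.
move=> t delta _ /andP[delta0 small] F m D alpha FC2 _ _ _ _ _ FK E M EF _ f Ff.
have [EG EM _ Eds] := EF f Ff.
have sigma_le_k : n%:R - 2 + s <= k%:R.
  by rewrite -(prednK (leq_trans _ n3)) // -natr1; lra.
apply: (dsC_set_le _ (cover_by_projf EM delta0 (@subset_refl _ _))
  (dsC_set_projf_graph (FC2 f Ff).1 (FK f Ff) EG EM delta0 sigma_le_k (powR_ge0 _ _) Eds)).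
rewrite (_ : - (3 * eps) = - (2 * eps) + - eps); last by ring.
rewrite powRD ?(gt_eqF delta0) ?implybT // ler_wpM2l ?powR_ge0 //.
have delta_small : 0 < delta <= expR (- eps^-2).
  by rewrite delta0 (le_trans small) // ler_pdivrMr // ler_peMr ?expR_ge0 ?ler1n.
by apply: le_trans (inv_le_powRN eps0 delta_small); rewrite invrK lerDl.
Qed.
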